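(* If a system $C=(1,c_2,c_3,c_4,c_5,2c_5-c_2)$ is canonical and its subsystem $(1,c_2,c_3,c_4,c_5)$ is noncanonical, then $C=(1,2,3,c_4,c_4+1,2c_4)$ and $c_4>4$.
   Context: A system is a tuple $C=(c_1,\dots,c_n)$ of integers with $1=c_1<c_2<\dots<c_n$; for $k\le n$, $(c_1,\dots,c_k)$ is a subsystem. For a positive integer $v$, $\mathrm{opt}_C(v)$ is the minimum of $\sum_i x_i$ over $x\in\mathbb{Z}_{\ge0}^n$ with $\sum_i c_ix_i=v$. The greedy representation of $v$ is produced by: for $i=n$ down to $1$, while $c_i\le$ remaining value, take a coin $c_i$. $\mathrm{grd}_C(v)$ is its number of coins. A positive integer $w$ is a counterexample if $\mathrm{opt}_C(w)<\mathrm{grd}_C(w)$; $C$ is canonical if it has none, noncanonical otherwise. *)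

From mathcomp Require Import all_boot.
Set Implicit Arguments. Unset Strict Implicit. Unset Printing Implicit Defensive.

Definition is_system (C : seq nat) : Prop :=
  head 0 C = 1 /\ sorted ltn C.

Definition value (C x : seq nat) : nat := \sum_(i < size C) nth 0 C i * nth 0 x i.

Definition is_repr (C x : seq nat) (v : nat) : Prop :=
  size x = size C /\ value C x = v.

(* Greedy: process coins from largest to smallest; for coin c, take as many
   coins c as fit (the "while c <= remaining" loop takes exactly rem %/ c
   coins and leaves rem %% c). *)
Fixpoint grd_aux (desc : seq nat) (v : nat) : nat :=
  match desc with
  | [::] => 0
  | c :: t => v %/ c + grd_aux t (v %% c)
  end.

Definition grd (C : seq nat) (v : nat) : nat := grd_aux (rev C) v.

Definition counterexample (C : seq nat) (w : nat) : Prop :=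
  0 < w /\ exists x, is_repr C x w /\ sumn x < grd C w.

Definition canonical (C : seq nat) : Prop := forall w, ~ counterexample C w.
Definition noncanonical (C : seq nat) : Prop := exists w, counterexample C w.

From mathcomp Require Import all_boot zify.
From Stdlib Require Import Classical.

Set Implicit Arguments.
Unset Strict Implicit.
Unset Printing Implicit Defensive.

(* Let w be the least counterexample of D = (1, c2, c3, c4, c5) and e = 2 c5 - c2.
   Below e the greedy algorithms of C and D agree, so canonicity of C forces
   e <= w, while the Kozen-Zaks bound gives w < c4 + c5.  Canonicity of C at the
   two-coin sums c4 + c5, c3 + c4 and c4 + c4, whose greedy representations may
   use at most two coins, yields c5 = c4 + c2 - 1 (hence w = e), c3 = 2 c2 - 1
   and, if c2 >= 3, c4 = 3 c2 - 2.  In that last case D = (1, t+1, 2t+1, 3t+1, 4t+1)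
   with t = c2 - 1 and w = 7t + 1: all coins are 1 mod t, so a representation of w
   needs more than t coins, which is already the greedy count t + 1.  The same
   computation rules out c4 = 4 when c2 = 2. *)

Lemma grd_aux0 (desc : seq nat) : grd_aux desc 0 = 0.
Proof. by elim: desc => //= c desc; rewrite div0n mod0n. Qed.

Lemma grd_aux_cons_lt (c : nat) (desc : seq nat) (v : nat) :
  v < c -> grd_aux (c :: desc) v = grd_aux desc v.
Proof. by move=> ltvc /=; rewrite divn_small // modn_small. Qed.

Lemma grd_aux_cons_ge (c : nat) (desc : seq nat) (v : nat) : 0 < c -> c <= v ->
  grd_aux (c :: desc) v = (grd_aux (c :: desc) (v - c)).+1.
Proof.
move=> c_gt0 lecv /=; rewrite -{1 2}(subnK lecv) modnDr.
by rewrite divnDr ?dvdnn // divnn c_gt0 addn1.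
Qed.

Lemma grd_aux_cat_lt (p desc : seq nat) (v : nat) :
  {in p, forall c, v < c} -> grd_aux (p ++ desc) v = grd_aux desc v.
Proof.
elim: p => // c p IHp ltv; rewrite cat_cons grd_aux_cons_lt ?ltv ?mem_head //.
by rewrite IHp // => x px; rewrite ltv // inE px orbT.
Qed.

Lemma grd_cat_lt (P Q : seq nat) (v : nat) :
  {in Q, forall c, v < c} -> grd (P ++ Q) v = grd P v.
Proof.
by move=> ltv; rewrite /grd rev_cat grd_aux_cat_lt // => c; rewrite mem_rev => /ltv.
Qed.

Lemma grd_rcons_ge (C : seq nat) (d v : nat) : 0 < d -> d <= v ->
  grd (rcons C d) v = (grd (rcons C d) (v - d)).+1.
Proof. by rewrite /grd rev_rcons; apply: grd_aux_cons_ge. Qed.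

Lemma system_uniq (C : seq nat) : is_system C -> uniq C.
Proof. by case=> _; apply: sorted_uniq; [apply: ltn_trans | apply: ltnn]. Qed.

Lemma system_mem1 (C : seq nat) : is_system C -> 1 \in C.
Proof. by case: C => [[]|c C [/= -> _]] //; rewrite mem_head. Qed.

Lemma system_gt0 (C : seq nat) (c : nat) : is_system C -> c \in C -> 0 < c.
Proof.
case: C => [[]|c1 C [/= -> /(order_path_min ltn_trans) /allP lt1C]] //.
by rewrite inE => /predU1P [-> // | /lt1C /ltnW].
Qed.

(* Representations as lists of coins, rather than the multiplicity vectors
   of [is_repr]: adding or removing a single coin is then just a cons. *)
Definition representable (C : seq nat) (v k : nat) : Prop :=
  exists2 s : seq nat, {subset s <= C} & sumn s = v /\ size s = k.

Lemma representable0 (C : seq nat) : representable C 0 0.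
Proof. by exists [::]. Qed.

Lemma representableDn (C : seq nat) (c n v k : nat) : c \in C ->
  representable C v k -> representable C (c * n + v) (n + k).
Proof.
move=> Cc [s sC [<- <-]]; exists (nseq n c ++ s).
  by move=> x; rewrite mem_cat mem_nseq => /orP [/andP [_ /eqP ->] | /sC].
by rewrite sumn_cat sumn_nseq size_cat size_nseq.
Qed.

Lemma representableD1 (C : seq nat) (c v k : nat) : c \in C ->
  representable C v k -> representable C (c + v) k.+1.
Proof. by move=> Cc /(representableDn 1 Cc); rewrite muln1. Qed.

Lemma representableS (C : seq nat) (v k : nat) : representable C v k.+1 ->
  exists2 c, c \in C & c <= v /\ representable C (v - c) k.
Proof.
case=> -[|c s] sC [<- //= [<-]]; exists c; first by apply: sC; rewrite mem_head.
split; first exact: leq_addr.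
by exists s; rewrite ?addKn // => x sx; apply: sC; rewrite inE sx orbT.
Qed.

Lemma representable_sub (C C' : seq nat) (v k : nat) :
  {subset C <= C'} -> representable C v k -> representable C' v k.
Proof. by move=> sCC' [s sC sv]; exists s => // x /sC /sCC'. Qed.

Lemma representable_grd_aux (C desc : seq nat) (v : nat) :
  {subset desc <= C} -> 1 \in desc -> representable C v (grd_aux desc v).
Proof.
elim: desc v => // c desc IHdesc v sdC desc1 /=; rewrite {1}(divn_eq v c) mulnC.
apply: representableDn; first by apply: sdC; rewrite mem_head.
case: (boolP (1 \in desc)) => [desc_1 | desc'1].
  by apply: IHdesc => // x dx; apply: sdC; rewrite inE dx orbT.
have -> : c = 1 by move: desc1; rewrite inE (negbTE desc'1) orbF => /eqP.
by rewrite modn1 grd_aux0; apply: representable0.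
Qed.

Lemma representable_grd (C : seq nat) (v : nat) :
  1 \in C -> representable C v (grd C v).
Proof.
by move=> C1; apply: representable_grd_aux; rewrite ?mem_rev // => x; rewrite mem_rev.
Qed.

Lemma grd_le1_mem (C : seq nat) (v : nat) :
  1 \in C -> 0 < v -> grd C v <= 1 -> v \in C.
Proof.
move=> C1 v_gt0 grd_le1; have [s sC [sv size_s]] := representable_grd v C1.
case: s sC sv size_s => [|c [|c' s]] sC /= sv size_s; try lia.
by rewrite -sv addn0 sC ?mem_head.
Qed.

Lemma value_map (C : seq nat) (f : nat -> nat) :
  value C [seq f c | c <- C] = \sum_(c <- C) c * f c.
Proof.
by rewrite /value (big_nth 0) big_mkord; apply: eq_bigr => i _; rewrite (nth_map 0).
Qed.

Lemma sum_count_mem (C s : seq nat) (F : nat -> nat) : uniq C -> {subset s <= C} ->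
  \sum_(c <- C) F c * count_mem c s = \sum_(x <- s) F x.
Proof.
move=> Cu; elim: s => [_|x s IHs sC].
  by rewrite big_nil big1 // => c _; rewrite muln0.
under eq_bigr do rewrite /= mulnDr.
rewrite big_split /= IHs => [|y sy]; last by apply: sC; rewrite inE sy orbT.
rewrite (bigD1_seq x) ?sC ?mem_head //= eqxx muln1 big_cons big1 ?addn0 // => c /negPf.
by rewrite eq_sym => ->; rewrite muln0.
Qed.

Lemma counterexample_representable (C : seq nat) (w : nat) :
  counterexample C w -> exists2 k, representable C w k & k < grd C w.
Proof.
case=> _ [x [[size_x <-] lt_grd]]; exists (sumn x) => //.
exists (flatten [seq nseq (nth 0 x i) (nth 0 C i) | i <- iota 0 (size C)]).
- move=> c /flattenP [t /mapP [i]]; rewrite mem_iota add0n => lt_iC -> /nseqP [-> _].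
  exact: mem_nth.
- split.
  + rewrite sumn_flatten -map_comp sumnE big_map /value.
    rewrite -(big_mkord xpredT (fun i => nth 0 C i * nth 0 x i)) /index_iota subn0.
    by apply: eq_bigr => i _ /=; rewrite sumn_nseq.
  + rewrite size_flatten /shape -map_comp -size_x.
    by rewrite -{3}(mkseq_nth 0 x); congr sumn; apply: eq_map => i /=; rewrite size_nseq.
Qed.

Lemma representable_counterexample (C : seq nat) (w k : nat) : uniq C -> 0 < w ->
  representable C w k -> k < grd C w -> counterexample C w.
Proof.
move=> Cu w_gt0 [s sC [sw ks]] lt_grd; split=> //.
exists [seq count_mem c s | c <- C]; split.
  by split; rewrite ?size_map // value_map sum_count_mem // -sumnE.
suff -> : sumn [seq count_mem c s | c <- C] = k by [].
have /= := sum_count_mem (fun=> 1) Cu sC; rewrite sum1_size ks => <-.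
by rewrite sumnE big_map; apply: eq_bigr => c _; rewrite mul1n.
Qed.

Lemma grd_le_representable (C : seq nat) (v k : nat) : uniq C ->
  ~ counterexample C v -> representable C v k -> grd C v <= k.
Proof.
move=> Cu not_cex repr_v; rewrite leqNgt; apply/negP => lt_grd.
case: (posnP v) => [v0 | v_gt0]; first by move: lt_grd; rewrite v0 /grd grd_aux0.
exact: not_cex (representable_counterexample Cu v_gt0 repr_v lt_grd).
Qed.

Definition min_counterexample (C : seq nat) (w : nat) : Prop :=
  counterexample C w /\ forall v, v < w -> ~ counterexample C v.

Lemma noncanonical_min_counterexample (C : seq nat) :
  noncanonical C -> exists w, min_counterexample C w.
Proof.
case=> w; elim/ltn_ind: w => w IHw cex_w.
case: (classic (exists2 v, v < w & counterexample C v)) => [[v ltvw] | no_smaller].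
  exact: IHw.
by exists w; split=> // v ltvw cex_v; apply: no_smaller; exists v.
Qed.

(* Kozen and Zaks' bound on the least counterexample. *)
Lemma min_counterexample_lt (C : seq nat) (c d w : nat) :
  is_system (rcons C d) -> {in C, forall x, x <= c} ->
  min_counterexample (rcons C d) w -> w < c + d.
Proof.
set D := rcons C d => sysD le_c [cex_w minw].
rewrite ltnNge; apply/negP => le_cd_w.
have grd_le v k : v < w -> representable D v k -> grd D v <= k.
  by move=> ltvw; apply: grd_le_representable (system_uniq sysD) (minw v ltvw).
have d_gt0 : 0 < d by apply: system_gt0 sysD _; rewrite mem_rcons mem_head.
have [[|k] repr_w lt_grd] := counterexample_representable cex_w.
  by case: repr_w cex_w => s _ [<- /size0nil ->] [].
have [x Dx [le_xw repr_wx]] := representableS repr_w.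
have x_gt0 : 0 < x := system_gt0 sysD Dx.
have le_grd_wx : grd D (w - x) <= k by apply: grd_le repr_wx; lia.
suff : grd D (w - d) <= grd D (w - x).
  by move: lt_grd; rewrite grd_rcons_ge // -/D; lia.
move: Dx; rewrite mem_rcons inE => /predU1P [-> // | Cx].
have le_xc := le_c x Cx.
rewrite [grd D (w - x)]grd_rcons_ge //; last by lia.
apply: grd_le; first by lia.
have -> : w - d = x + (w - x - d) by lia.
apply: representableD1; first by rewrite mem_rcons inE Cx orbT.
by apply: representable_grd; apply: system_mem1.
Qed.

Lemma counterexample_cat (P Q : seq nat) (w : nat) : {in Q, forall c, w < c} ->
  uniq (P ++ Q) -> counterexample P w -> counterexample (P ++ Q) w.
Proof.
move=> ltQ PQu cex_w; have [k repr_w lt_grd] := counterexample_representable cex_w.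
apply: (representable_counterexample PQu cex_w.1 (k := k)); last by rewrite grd_cat_lt.
by apply: representable_sub repr_w => x Px; rewrite mem_cat Px.
Qed.

Lemma canonical_add2_sub (P Q : seq nat) (m x y : nat) :
  is_system (rcons P m ++ Q) -> canonical (rcons P m ++ Q) -> 1 \in P ->
  x \in rcons P m ++ Q -> y \in rcons P m ++ Q ->
  {in Q, forall c, x + y < c} -> m < x + y < m + m -> x + y - m \in P.
Proof.
move=> sysC canC P1 Cx Cy ltQ /andP [lt_m lt_mm].
have repr_xy : representable (rcons P m ++ Q) (x + y) 2.
  apply: representableD1 Cx _; rewrite -[y]addn0.
  exact: representableD1 Cy (representable0 _).
have := grd_le_representable (system_uniq sysC) (canC _) repr_xy.
rewrite grd_cat_lt // grd_rcons_ge; [|lia|lia].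
rewrite -cats1 grd_cat_lt => [grd_le2|c]; last by rewrite inE => /eqP ->; lia.
by apply: grd_le1_mem => //; lia.
Qed.

Definition arith_system (t : nat) : seq nat :=
  [:: 1; t.+1; 2 * t + 1; 3 * t + 1; 4 * t + 1].

Lemma grd_arith_system (t : nat) : 0 < t -> grd (arith_system t) (7 * t + 1) = t.+1.
Proof.
move=> t_gt0; rewrite /grd [rev _]/= grd_aux_cons_ge; [|lia|lia].
rewrite grd_aux_cons_lt; last lia.
rewrite grd_aux_cons_lt; last lia.
rewrite grd_aux_cons_ge; [|lia|lia].
rewrite (@grd_aux_cat_lt [:: 2 * t + 1; t.+1]) => [/=|x]; first by rewrite divn1; lia.
by rewrite !inE => /orP [] /eqP ->; lia.
Qed.

Lemma sumn_1mod (t m : nat) (s : seq nat) :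
  {in s, forall x, exists2 j, j <= m & x = 1 + t * j} ->
  exists2 J, J <= m * size s & sumn s = size s + t * J.
Proof.
elim: s => [_|x s IHs s_1mod]; first by exists 0; rewrite ?muln0.
have [j le_jm ->] := s_1mod x (mem_head x s).
have [J le_J sumn_s] : exists2 J, J <= m * size s & sumn s = size s + t * J.
  by apply: IHs => y sy; apply: s_1mod; rewrite inE sy orbT.
by exists (j + J); rewrite /= ?mulnS; lia.
Qed.

Lemma representable_arith_system_gt (t k : nat) : 0 < t ->
  representable (arith_system t) (7 * t + 1) k -> t < k.
Proof.
move=> t_gt0 [s sA [sv <-]].
have [|J le_J s_eq] := @sumn_1mod t 4 s.
  move=> x /sA; rewrite !inE => /predU1P [-> | /or4P [] /eqP ->].
  - by exists 0; lia.
  - by exists 1; lia.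
  - by exists 2; lia.
  - by exists 3; lia.
  - by exists 4; lia.
rewrite ltnNge; apply/negP => le_st; rewrite sv in s_eq.
case: (leqP J 6) => [le_J6 | lt_6J].
  by have := leq_mul (leqnn t) le_J6; lia.
by have := leq_mul (leqnn t) lt_6J; lia.
Qed.

Lemma arith_system_not_counterexample (t : nat) : 0 < t ->
  ~ counterexample (arith_system t) (7 * t + 1).
Proof.
move=> t_gt0 /counterexample_representable [k /(representable_arith_system_gt t_gt0)].
by rewrite grd_arith_system //; lia.
Qed.

Section Lemma7.

Variables c2 c3 c4 c5 w : nat.
Local Notation e := (2 * c5 - c2).
Local Notation C := [:: 1; c2; c3; c4; c5; e].
Local Notation D := [:: 1; c2; c3; c4; c5].
Hypotheses (sysC : is_system C) (canC : canonical C) (minw : min_counterexample D w).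

Lemma coins_lt : [/\ 1 < c2, c2 < c3, c3 < c4, c4 < c5 & c5 < e].
Proof. by case: sysC => _ /=; rewrite andbT => /and5P. Qed.

Lemma min_counterexample_bounds : e <= w < c4 + c5.
Proof.
have [lt1_2 lt23 lt34 lt45 _] := coins_lt.
have sysD : is_system D by split; rewrite //= lt1_2 lt23 lt34 lt45.
apply/andP; split.
  rewrite leqNgt; apply/negP => lt_we; apply: (@canC w).
  apply: (counterexample_cat (P := D) (Q := [:: e]) _ (system_uniq sysC)).
    by move=> x; rewrite inE => /eqP ->.
  exact: minw.1.
apply: (min_counterexample_lt (C := [:: 1; c2; c3; c4]) sysD _ minw).
by move=> x; rewrite !inE; lia.
Qed.

Lemma c5_eq : c5 = c4 + c2 - 1.
Proof.
have [? ? ? ? ?] := coins_lt; have /andP [? ?] := min_counterexample_bounds.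
have : c4 + c5 - e \in D.
  by apply: (canonical_add2_sub (P := D) (Q := [::]) sysC canC);
    rewrite ?inE ?eqxx ?orbT //; lia.
by rewrite !inE; lia.
Qed.

Lemma add2_sub_c5 (x y : nat) : x \in D -> y \in D -> c5 < x + y < e ->
  x + y - c5 \in [:: 1; c2; c3; c4].
Proof.
move=> Dx Dy /andP [lt5 lte].
apply: (canonical_add2_sub (P := [:: 1; c2; c3; c4]) (Q := [:: e]) sysC canC) => //.
- by rewrite mem_cat Dx.
- by rewrite mem_cat Dy.
- by move=> z; rewrite inE => /eqP ->.
- by move: Dx Dy; rewrite !inE; lia.
Qed.

Lemma c3_eq : c3 = 2 * c2 - 1.
Proof.
have [? ? ? ? ?] := coins_lt; have := c5_eq.
by have := add2_sub_c5 (x := c3) (y := c4); rewrite !inE !eqxx /= !orbT => /(_ isT isT); lia.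
Qed.

Lemma c4_eq : 2 < c2 -> c4 = 3 * c2 - 2.
Proof.
have [? ? ? ? ?] := coins_lt; have := c5_eq; have := c3_eq.
by have := add2_sub_c5 (x := c4) (y := c4); rewrite !inE !eqxx /= !orbT => /(_ isT isT); lia.
Qed.

Lemma c4_neq : c4 != 3 * c2 - 2.
Proof.
have [? ? ? ? ?] := coins_lt; have /andP [? ?] := min_counterexample_bounds.
have def_c5 := c5_eq; have def_c3 := c3_eq.
apply/eqP => def_c4; have [t def_c2] : exists t, c2 = t.+1 by exists c2.-1; lia.
move: minw.1; rewrite (_ : w = 7 * t + 1); last by lia.
have [-> -> -> ->] : [/\ c2 = t.+1, c3 = 2 * t + 1, c4 = 3 * t + 1 & c5 = 4 * t + 1].
  by split; lia.
by apply: arith_system_not_counterexample; lia.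
Qed.

End Lemma7.

Theorem lemma7 (c2 c3 c4 c5 : nat) :
  is_system [:: 1; c2; c3; c4; c5; 2 * c5 - c2] ->
  canonical [:: 1; c2; c3; c4; c5; 2 * c5 - c2] ->
  noncanonical [:: 1; c2; c3; c4; c5] ->
  [/\ c2 = 2, c3 = 3, c5 = c4 + 1 & 4 < c4].
Proof.
move=> sysC canC /noncanonical_min_counterexample [w minw].
have [lt1_2 lt23 lt34 _ _] := coins_lt sysC.
have eq_c5 := c5_eq sysC canC minw; have eq_c3 := c3_eq sysC canC minw.
have eq_c4 := c4_eq sysC canC minw; have /eqP ne_c4 := c4_neq sysC canC minw.
by split; lia.
Qed.
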